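(* Construct vectors in $\mathbb{R}^n$ as follows. For each $j=1,2,\dots,n$, choose $n-j+1$ linearly independent vectors in $\mathbb{R}^n$ each of which has its first $j-1$ coordinates equal to zero and its $j$-th coordinate nonzero (so for $j=1$: $n$ linearly independent vectors with nonzero first coordinate; for $j=2$: $n-1$ linearly independent vectors with zero first coordinate and nonzero second coordinate; and so on). The resulting collection $\{x_k\}_{k=1}^{\frac{n(n+1)}{2}}$ is a frame for $\mathbb{R}^n$ which is injective.
   Context: A family $\{x_k\}$ of vectors in a Hilbert space is called injective if whenever a self-adjoint operator $T$ satisfies $\langle Tx_k,x_k\rangle=0$ for all $k$, then $T=0$. *)

From HB Require Import structures.
From mathcomp Require Import all_boot all_order all_algebra.
From mathcomp Require Import reals.
Set Implicit Arguments. Unset Strict Implicit. Unset Printing Implicit Defensive.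
Import Order.TTheory GRing.Theory Num.Theory.
Local Open Scope ring_scope.

Definition ip (R : realType) (n : nat) (x y : 'rV[R]_n) : R := (x *m y^T) 0 0.

(* a linear operator on R^n, represented by a matrix acting on row vectors: T x = x *m T *)
Definition self_adjoint (R : realType) (n : nat) (T : 'M[R]_n) : Prop :=
  forall x y : 'rV[R]_n, ip (x *m T) y = ip x (y *m T).

Definition is_frame (R : realType) (n : nat) (I : finType) (x : I -> 'rV[R]_n) : Prop :=
  exists A B : R, 0 < A /\ A <= B /\
    forall y : 'rV[R]_n,
      A * ip y y <= \sum_(k : I) (ip y (x k)) ^+ 2 /\
      \sum_(k : I) (ip y (x k)) ^+ 2 <= B * ip y y.

Definition injective_family (R : realType) (n : nat) (I : finType) (x : I -> 'rV[R]_n) : Prop :=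
  forall T : 'M[R]_n, self_adjoint T -> (forall k, ip (x k *m T) (x k) = 0) -> T = 0.

Definition lin_indep (R : realType) (n : nat) (I : finType) (v : I -> 'rV[R]_n) : Prop :=
  forall c : I -> R, \sum_(i : I) c i *: v i = 0 -> forall i, c i = 0.

From HB Require Import structures.
From mathcomp Require Import all_boot all_order all_algebra.
From mathcomp Require Import reals.
From mathcomp Require Import ring.
Set Implicit Arguments. Unset Strict Implicit. Unset Printing Implicit Defensive.
Import Order.TTheory GRing.Theory Num.Theory.
Local Open Scope ring_scope.

(* A finite family is a frame as soon as it spans R^n (Cauchy-Schwarz gives both
   bounds), and the first block, n independent vectors, already spans R^n.
   For injectivity, let T be symmetric with <x_k T, x_k> = 0 for all k, and assume
   T vanishes on the corner of indices > j.  For x vanishing below j one computes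
   <x T, x> = x_j <x, u> with u = 2 T_j - T_jj e_j, where T_j is the j-th row of T.
   The vectors of block j have x_j <> 0 and span every vector vanishing below j,
   so u is orthogonal to all of these; testing against e_b (b >= j) shows that
   T_jb = 0, and the vanishing corner grows down to j. *)

Lemma CauchySchwarz_sum (R : realDomainType) (I : finType) (a b : I -> R) :
  (\sum_i a i * b i) ^+ 2 <= (\sum_i a i ^+ 2) * (\sum_i b i ^+ 2).
Proof.
pose F i j := a i ^+ 2 * b j ^+ 2 - (a i * b i) * (a j * b j).
have lagrange : \sum_i \sum_j (a i * b j - a j * b i) ^+ 2 = 2 * \sum_i \sum_j F i j.
  rewrite mulr2n mulrDl mul1r [X in _ + X]exchange_big -big_split /=.
  apply: eq_bigr => i _; rewrite -big_split /=; apply: eq_bigr => j _; rewrite /F; ring.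
have : 0 <= \sum_i \sum_j (a i * b j - a j * b i) ^+ 2.
  by apply: sumr_ge0 => i _; apply: sumr_ge0 => j _; apply: sqr_ge0.
rewrite lagrange pmulr_rge0 // /F.
under eq_bigr do rewrite sumrB.
by rewrite sumrB -!big_distrlr /= -expr2 subr_ge0.
Qed.

Lemma row_free_submx_sym (F : fieldType) m n (V E : 'M[F]_(m, n)) :
  row_free V -> (V <= E)%MS -> (E <= V)%MS.
Proof.
move=> freeV sVE; have [_ <-] := mxrank_leqif_sup sVE.
by rewrite eqn_leq mxrankS //= (eqP freeV) rank_leq_row.
Qed.

Section InnerProduct.
Variables (R : realType) (n : nat).
Implicit Types (x y : 'rV[R]_n) (T : 'M[R]_n).

Lemma ipE x y : ip x y = \sum_l x 0 l * y 0 l.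
Proof. by rewrite /ip mxE; apply: eq_bigr => l _; rewrite mxE. Qed.

Lemma ipC x y : ip x y = ip y x.
Proof. by rewrite !ipE; apply: eq_bigr => l _; rewrite mulrC. Qed.

Lemma ip_delta x l : ip x 'e_l = x 0 l.
Proof. by rewrite /ip trmx_delta -colE mxE. Qed.

Lemma ip_suml (I : finType) (c : I -> R) (z : I -> 'rV[R]_n) y :
  ip (\sum_i c i *: z i) y = \sum_i c i * ip (z i) y.
Proof.
by rewrite /ip mulmx_suml summxE; apply: eq_bigr => i _; rewrite -scalemxAl mxE.
Qed.

Lemma ip_self x : ip x x = \sum_l x 0 l ^+ 2.
Proof. by rewrite ipE; apply: eq_bigr => l _; rewrite expr2. Qed.

Lemma ip_ge0 x : 0 <= ip x x.
Proof. by rewrite ip_self sumr_ge0 // => l _; apply: sqr_ge0. Qed.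

Lemma ip_sqr_le x y : ip x y ^+ 2 <= ip x x * ip y y.
Proof. rewrite !ip_self ipE; exact: CauchySchwarz_sum. Qed.

Lemma self_adjoint_sym T : self_adjoint T -> forall a b, T a b = T b a.
Proof.
move=> saT a b; have := saT 'e_a 'e_b.
by rewrite ip_delta ipC ip_delta -!rowE !mxE.
Qed.

End InnerProduct.

Section Spanning.
Variables (R : realType) (n : nat).
Implicit Types (y : 'rV[R]_n).

Definition in_span {I : finType} (z : I -> 'rV[R]_n) y :=
  exists c : I -> R, y = \sum_i c i *: z i.

Definition spanning {I : finType} (z : I -> 'rV[R]_n) := forall y, in_span z y.

Lemma spanning_comp (I J : finType) (z : I -> 'rV[R]_n) (f : J -> I) :
  spanning (z \o f) -> spanning z.
Proof.
move=> span y; have [c ->] := span y.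
exists (fun i => \sum_(k | f k == i) c k).
rewrite (partition_big f xpredT) //=; apply: eq_bigr => i _.
by rewrite scaler_suml; apply: eq_bigr => k /eqP <-.
Qed.

Lemma spanning_frame (I : finType) (z : I -> 'rV[R]_n) : spanning z -> is_frame z.
Proof.
move=> span; pose S y := \sum_k ip y (z k) ^+ 2.
have /fin_all_exists [c dc] l : exists c : I -> R, 'e_l = \sum_k c k *: z k.
  exact: span.
pose C := \sum_l \sum_k c l k ^+ 2; pose D := \sum_k ip (z k) (z k).
have C_ge0 : 0 <= C by do 2!apply: sumr_ge0 => ? _; apply: sqr_ge0.
have D_ge0 : 0 <= D by apply: sumr_ge0 => k _; apply: ip_ge0.
have lower y : ip y y <= C * S y.
  rewrite ip_self mulr_suml; apply: ler_sum => l _.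
  have -> : y 0 l = \sum_k c l k * ip y (z k).
    by rewrite -ip_delta dc ipC ip_suml; under eq_bigr do rewrite ipC.
  exact: CauchySchwarz_sum.
have upper y : S y <= D * ip y y.
  rewrite mulr_suml; apply: ler_sum => k _; rewrite mulrC; exact: ip_sqr_le.
have C1_gt0 : 0 < C + 1 by rewrite ltr_wpDl.
exists (C + 1)^-1, (D + (C + 1)^-1); do !split.
- by rewrite invr_gt0.
- by rewrite lerDr.
- rewrite ler_pdivrMl //; apply: le_trans (lower y) _.
  by rewrite ler_wpM2r ?lerDl // sumr_ge0 // => k _; apply: sqr_ge0.
- apply: le_trans (upper y) _.
  by rewrite ler_wpM2r ?lerDl ?ip_ge0 // invr_ge0 ltW.
Qed.

Definition vanishes_below (j : nat) y := forall l : 'I_n, (l < j)%N -> y 0 l = 0.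

Definition tail_mx (j : nat) : 'M[R]_(n - j, n) := \matrix_(k, l) ((l : nat) == j + k)%N%:R.

Lemma vanishes_below_tail_mx j y : vanishes_below j y -> (y <= tail_mx j)%MS.
Proof.
move=> y0; rewrite [y]row_sum_delta; apply/summx_sub => l _.
have [lj|jl] := ltnP l j; first by rewrite y0 // scale0r sub0mx.
have kP : (l - j < n - j)%N by rewrite ltn_sub2r // (leq_ltn_trans jl).
apply/scalemx_sub; rewrite (_ : 'e_l = row (Ordinal kP) (tail_mx j)).
  exact: row_sub.
by apply/rowP => l'; rewrite !mxE /= subnKC.
Qed.

Lemma lin_indep_row_free m (w : 'I_m -> 'rV[R]_n) :
  lin_indep w -> row_free (\matrix_i w i).
Proof.
move=> wind; apply: inj_row_free => c; rewrite mulmx_sum_row => c0.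
apply/rowP => i; rewrite mxE; apply: (wind (fun i => c 0 i)).
by apply: etrans c0; apply: eq_bigr => k _; rewrite rowK.
Qed.

Lemma submx_in_span m (w : 'I_m -> 'rV[R]_n) y :
  (y <= \matrix_i w i)%MS -> in_span w y.
Proof.
case/submxP => c ->; exists (fun i => c 0 i).
by rewrite mulmx_sum_row; apply: eq_bigr => i _; rewrite rowK.
Qed.

Lemma lin_indep_in_span j (w : 'I_(n - j) -> 'rV[R]_n) :
  lin_indep w -> (forall i, vanishes_below j (w i)) ->
  forall y, vanishes_below j y -> in_span w y.
Proof.
move=> wind w0 y y0; apply: submx_in_span; apply: submx_trans (vanishes_below_tail_mx y0) _.
apply: row_free_submx_sym; first exact: lin_indep_row_free.
by apply/row_subP => i; rewrite rowK; apply: vanishes_below_tail_mx.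
Qed.

End Spanning.

Section Injectivity.
Variables (R : realType) (n : nat) (T : 'M[R]_n).
Hypothesis Tsym : forall a b, T a b = T b a.

Definition corner_eq0 (j : nat) := forall a b : 'I_n, (j <= a)%N -> (j <= b)%N -> T a b = 0.

Lemma qform_corner (j : 'I_n) (x : 'rV[R]_n) :
  corner_eq0 j.+1 -> vanishes_below j x ->
  ip (x *m T) x = x 0 j * (2 * ip x (row j T) - x 0 j * T j j).
Proof.
move=> Tc x0.
have xT_col (b : 'I_n) : (j < b)%N -> (x *m T) 0 b = x 0 j * T j b.
  move=> jb; rewrite mxE (bigD1 j) //= big1 ?addr0 // => a /negPf aj.
  have [aj'|ja|/val_inj ej] := ltngtP a j; last by rewrite ej eqxx in aj.
    by rewrite x0 // mul0r.
  by rewrite Tc // mulr0.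
have xT_j : (x *m T) 0 j = ip x (row j T).
  by rewrite ipE mxE; apply: eq_bigr => a _; rewrite mxE Tsym.
have ip_row : ip x (row j T) = x 0 j * T j j + \sum_(b : 'I_n | b != j) x 0 b * T j b.
  by rewrite ipE (bigD1 j) //= mxE; congr (_ + _); apply: eq_bigr => b _; rewrite mxE.
rewrite ipE (bigD1 j) //= xT_j.
have -> : \sum_(b : 'I_n | b != j) (x *m T) 0 b * x 0 b =
           x 0 j * \sum_(b : 'I_n | b != j) x 0 b * T j b.
  rewrite mulr_sumr; apply: eq_bigr => b /negPf bj.
  have [bj'|jb|/val_inj e] := ltngtP b j; last by rewrite e eqxx in bj.
    by rewrite x0 // mulr0 mul0r mulr0.
  by rewrite xT_col //; ring.
rewrite ip_row; ring.
Qed.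

Lemma corner_eq0_step (j : 'I_n) (w : 'I_(n - j) -> 'rV[R]_n) :
  lin_indep w -> (forall i, vanishes_below j (w i)) -> (forall i, w i 0 j != 0) ->
  (forall i, ip (w i *m T) (w i) = 0) -> corner_eq0 j.+1 -> corner_eq0 j.
Proof.
move=> wind w0 wj wq Tc.
pose u := 2 *: row j T - T j j *: 'e_j.
have ip_u x : ip x u = 2 * ip x (row j T) - x 0 j * T j j.
  by rewrite ipC [ip x _]ipC -ip_delta [ip x 'e_j]ipC /u /ip mulmxBl -!scalemxAl !mxE; ring.
have u_orth i : ip (w i) u = 0.
  by move/eqP: (wq i); rewrite (qform_corner Tc (w0 i)) -ip_u mulf_eq0 (negPf (wj i)) => /eqP.
have u_perp y : vanishes_below j y -> ip y u = 0.
  move=> y0; have [c ->] := lin_indep_in_span wind w0 y0.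
  by rewrite ip_suml big1 // => i _; rewrite u_orth mulr0.
have Tj (b : 'I_n) : (j <= b)%N -> T j b = 0.
  move=> jb; have eb0 : vanishes_below j ('e_b : 'rV[R]_n).
    by move=> l lj; rewrite mxE eqxx -val_eqE (ltn_eqF (leq_trans lj jb)).
  have /eqP := u_perp _ eb0; rewrite ip_u ipC ip_delta !mxE eqxx /=.
  have [<-|_] := eqVneq j b; first by rewrite mulr1n mul1r mulr_natl mulr2n addrK => /eqP.
  by rewrite mul0r subr0 mulf_eq0 pnatr_eq0 => /eqP.
move=> a b ja jb.
have [ja'|aj|/val_inj <-] := ltngtP j a; last exact: Tj.
  have [jb'|bj|/val_inj <-] := ltngtP j b; last by rewrite Tsym Tj.
    exact: Tc.
  by rewrite leqNgt bj in jb.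
by rewrite leqNgt aj in ja.
Qed.
End Injectivity.

Definition concat_blocks (R : realType) n (v : forall j : 'I_n, 'I_(n - j) -> 'rV[R]_n)
  (p : {j : 'I_n & 'I_(n - j)}) := v (tag p) (tagged p).

Lemma triangular_spanning (R : realType) n (v : forall j : 'I_n, 'I_(n - j) -> 'rV[R]_n) :
  (forall j, lin_indep (v j)) -> (forall (j : 'I_n) i, vanishes_below j (v j i)) ->
  spanning (concat_blocks v).
Proof.
move=> v_indep v_vanishes; have [n0|n_gt0] := posnP n.
  by move=> y; exists (fun=> 0); apply/rowP => l; have := ltn_ord l; rewrite {2}n0.
pose j0 : 'I_n := Ordinal n_gt0.
apply: (@spanning_comp _ _ _ _ _ (fun i => Tagged _ (i : 'I_(n - j0)))) => y.
by apply: (lin_indep_in_span (v_indep j0) (v_vanishes j0)) => l; rewrite ltn0.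
Qed.

Lemma triangular_injective (R : realType) n (v : forall j : 'I_n, 'I_(n - j) -> 'rV[R]_n) :
  (forall j, lin_indep (v j)) -> (forall (j : 'I_n) i, vanishes_below j (v j i)) ->
  (forall (j : 'I_n) i, v j i 0 j != 0) -> injective_family (concat_blocks v).
Proof.
move=> v_indep v_vanishes v_pivot T saT vq; have Tsym := self_adjoint_sym saT.
have step (j : 'I_n) : corner_eq0 T j.+1 -> corner_eq0 T j.
  exact: (corner_eq0_step Tsym (v_indep j) (v_vanishes j) (v_pivot j)
           (fun i => vq (existT _ j i))).
have corner d : corner_eq0 T (n - d).
  elim: d => [|d IH]; first by move=> a b; rewrite subn0 leqNgt ltn_ord.
  have [d_lt_n|n_le_d] := ltnP d n; last first.
    by move: IH; rewrite subnS (eqP (_ : (n - d == 0)%N)) // subn_eq0.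
  have j_lt_n : (n - d.+1 < n)%N by rewrite ltn_subrL (leq_ltn_trans (leq0n d) d_lt_n).
  by move: (step (Ordinal j_lt_n)); rewrite /= subnSK //; apply.
by apply/matrixP => a b; rewrite mxE (corner n) ?subnn.
Qed.

(* indices are 0-based: block j : 'I_n consists of n - j vectors v j i,
   whose coordinates 0..j-1 vanish and whose coordinate j is nonzero. *)
Theorem mainTheorem4 (R : realType) (n : nat)
  (v : forall j : 'I_n, 'I_(n - j) -> 'rV[R]_n)
  (hind : forall j : 'I_n, lin_indep (v j))
  (hzero : forall (j : 'I_n) (i : 'I_(n - j)) (k : 'I_n), (k < j)%N -> v j i 0 k = 0)
  (hnz : forall (j : 'I_n) (i : 'I_(n - j)), v j i 0 j != 0) :
  is_frame (fun p : {j : 'I_n & 'I_(n - j)} => v (tag p) (tagged p)) /\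
  injective_family (fun p : {j : 'I_n & 'I_(n - j)} => v (tag p) (tagged p)).
Proof.
split; first exact: spanning_frame (triangular_spanning hind hzero).
exact: triangular_injective hind hzero hnz.
Qed.
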